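(* $\delta(1)\le 4$; that is, $1\in E_4$: every multiset of four decimal digits can be condensed into $1$.
   Context: For a finite nonempty multiset $S$ of real numbers, $V(S)$ is the smallest set of real numbers such that: (1) if $|S|=1$ then $S\subseteq V(S)$; (2) if $|S|\ge 2$, then for all nonempty multisets $A,B$ with $A+B=S$ (multiplicities add) and all $a\in V(A)$, $b\in V(B)$, each of $a+b,\ a-b,\ b-a,\ ab,\ a/b,\ b/a,\ a^b,\ b^a$ lies in $V(S)$ whenever it is a well-defined real number; (3) if $a\in V(S)$ is a nonnegative integer then $a!\in V(S)$ (with $0!=1$). Let $D=\{0,\dots,9\}$; for $k\ge1$, $E_k$ is the intersection of $V(S)$ over all multisets $S$ of size $k$ with all elements in $D$. For a number $n$, $\delta(n)=\min\{k\ge1: n\in E_k\}$. *)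

From Stdlib Require Import Reals ZArith List Permutation.
Import ListNotations.
Open Scope R_scope.

(* z is the value of x^y, whenever x^y is a well-defined real number:
   - x > 0, any real y : x^y = Rpower x y (= exp (y ln x));
   - x = 0, y > 0      : 0^y = 0;
   - x < 0, y integer  : x^y = powerRZ x y.
   (0^0, 0^(negative), and negative bases with non-integer exponents are
   treated as undefined.) *)
Definition pow_rel (x y z : R) : Prop :=
  (0 < x /\ z = Rpower x y)
  \/ (x = 0 /\ 0 < y /\ z = 0)
  \/ (x < 0 /\ exists k : Z, y = IZR k /\ z = powerRZ x k).

Definition combine (a b c : R) : Prop :=
  c = a + b \/ c = a - b \/ c = b - a \/ c = a * b
  \/ (b <> 0 /\ c = a / b) \/ (a <> 0 /\ c = b / a)
  \/ pow_rel a b c \/ pow_rel b a c.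

(* Multisets are represented by lists; A + B = S is Permutation S (A ++ B).
   V S x  means  x ∈ V(S); the inductive definition gives the smallest set. *)
Inductive V : list R -> R -> Prop :=
| V_single : forall x : R, V [x] x
| V_comb : forall (S A B : list R) (a b c : R),
    A <> [] -> B <> [] -> Permutation S (A ++ B) ->
    V A a -> V B b -> combine a b c -> V S c
| V_fact : forall (S : list R) (n : nat),
    V S (INR n) -> V S (INR (fact n)).

Definition E (k : nat) (x : R) : Prop :=
  forall l : list nat, length l = k -> Forall (fun d => (d <= 9)%nat) l ->
    V (map INR l) x.

(* 1 is reached from four digits as soon as one of them is 0 (then 0 * rest = 0 and 0! = 1)
   or 1 (then 1 ^ rest = 1), two of them are equal or consecutive (their difference is 0
   or 1), or, for some labelling x, y, z, w, either x + y = z or x + w = y + z (a difference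
   0, then factorial).  Every multiset of four digits has such a pattern: otherwise the
   digits would be four pairwise non-adjacent numbers in {2, ..., 9}, and each of the five
   such sets, e.g. {2,4,6,9} with 2 + 4 = 6, has one.  The final check is by enumeration. *)
From Pilot Require Import Defs.
From Stdlib Require Import Reals Arith List Permutation Lia Lra.
Import ListNotations.
Open Scope R_scope.

Lemma V_perm (S T : list R) (x : R) : V S x -> Permutation S T -> V T x.
Proof.
  intros HS; revert T; induction HS; intros T HP.
  - apply Permutation_length_1_inv in HP; subst; constructor.
  - apply (V_comb T A B a b c); auto.
    apply perm_trans with S; [apply Permutation_sym|]; assumption.
  - apply V_fact; auto.
Qed.

Lemma V_nonempty (S : list R) : S <> [] -> exists x, V S x.
Proof.
  induction S as [|y t IH]; intros HS; [congruence|].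
  destruct t as [|z t]; [exists y; constructor|].
  destruct IH as [b Hb]; [discriminate|].
  exists (y + b).
  apply (V_comb _ [y] (z :: t) y b); try discriminate; auto using Permutation_refl.
  - constructor.
  - left; reflexivity.
Qed.

Lemma V_app (A B : list R) (a b c : R) :
  A <> [] -> B <> [] -> V A a -> V B b -> Defs.combine a b c -> V (A ++ B) c.
Proof. intros; apply (V_comb _ A B a b c); auto using Permutation_refl. Qed.

Lemma V_pair (x y c : R) : Defs.combine x y c -> V [x; y] c.
Proof. intros H; apply (V_app [x] [y] x y); try discriminate; auto; constructor. Qed.

Lemma V_one_of_zero (S : list R) : V S 0 -> V S 1.
Proof. intros H; change (V S (INR (fact 0))); apply V_fact, H. Qed.

Lemma V_app_zero_l (A B : list R) : A <> [] -> B <> [] -> V A 0 -> V (A ++ B) 1.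
Proof.
  intros HA HB H0; apply V_one_of_zero.
  destruct (V_nonempty B HB) as [b Hb].
  apply (V_app A B 0 b); auto.
  do 3 right; left; ring.
Qed.

Lemma V_app_one_l (A B : list R) : A <> [] -> B <> [] -> V A 1 -> V (A ++ B) 1.
Proof.
  intros HA HB H1.
  destruct (V_nonempty B HB) as [b Hb].
  apply (V_app A B 1 b); auto.
  do 6 right; left; left; split; [lra|].
  unfold Rpower; rewrite ln_1, Rmult_0_r, exp_0; reflexivity.
Qed.

Definition one_pattern (x y z w : R) : Prop :=
  x = 0 \/ x = 1 \/ x = y \/ x = y + 1 \/ x + y = z \/ x + w = y + z.

Lemma V_one_pattern (x y z w : R) : one_pattern x y z w -> V [x; y; z; w] 1.
Proof.
  intros [H|[H|[H|[H|[H|H]]]]].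
  - apply (V_app_zero_l [x] [y; z; w]); try discriminate; subst; constructor.
  - apply (V_app_one_l [x] [y; z; w]); try discriminate; subst; constructor.
  - apply (V_app_zero_l [x; y] [z; w]); try discriminate.
    apply V_pair; right; left; lra.
  - apply (V_app_one_l [x; y] [z; w]); try discriminate.
    apply V_pair; right; left; lra.
  - apply (V_app_zero_l [x; y; z] [w]); try discriminate.
    apply (V_app [x; y] [z] (x + y) z); try discriminate.
    + apply V_pair; left; reflexivity.
    + constructor.
    + right; left; lra.
  - apply V_one_of_zero, (V_app [x; y] [z; w] (x - y) (z - w)); try discriminate.
    + apply V_pair; right; left; reflexivity.
    + apply V_pair; right; left; reflexivity.
    + right; left; lra.
Qed.

Definition one_patternb (x y z w : nat) : bool :=
  (Nat.eqb x 0 || Nat.eqb x 1 || Nat.eqb x y || Nat.eqb x (y + 1)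
   || Nat.eqb (x + y) z || Nat.eqb (x + w) (y + z))%bool.

Lemma one_patternbP (x y z w : nat) :
  one_patternb x y z w = true -> one_pattern (INR x) (INR y) (INR z) (INR w).
Proof.
  unfold one_patternb, one_pattern; rewrite !Bool.orb_true_iff, !Nat.eqb_eq.
  intros [[[[[H|H]|H]|H]|H]|H]; rewrite <- ?plus_INR, ?H.
  - left; reflexivity.
  - right; left; reflexivity.
  - do 2 right; left; reflexivity.
  - do 3 right; left; rewrite plus_INR; reflexivity.
  - do 4 right; left; reflexivity.
  - do 5 right; reflexivity.
Qed.

Section Arrangements.

Context {A : Type}.

Fixpoint picks (l : list A) : list (A * list A) :=
  match l with
  | [] => []
  | x :: t => (x, t) :: map (fun '(y, r) => (y, x :: r)) (picks t)
  end.

Fixpoint arrangements (n : nat) (l : list A) : list (list A) :=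
  match n with
  | O => [[]]
  | S n => flat_map (fun '(y, r) => map (cons y) (arrangements n r)) (picks l)
  end.

Lemma picks_perm (l : list A) (y : A) (r : list A) :
  In (y, r) (picks l) -> Permutation l (y :: r).
Proof.
  revert y r; induction l as [|x t IH]; simpl; intros y r; [tauto|].
  intros [E|Hin]; [inversion E; reflexivity|].
  apply in_map_iff in Hin as [[y' r'] [E Hin]]; inversion E; subst.
  apply perm_trans with (x :: y :: r'); [apply perm_skip, IH, Hin | apply perm_swap].
Qed.

Lemma arrangements_perm (n : nat) (l p : list A) :
  length l = n -> In p (arrangements n l) -> Permutation l p.
Proof.
  revert l p; induction n as [|n IH]; simpl; intros l p Hl Hp.
  - destruct l; [|discriminate]; destruct Hp as [<-|[]]; constructor.
  - apply in_flat_map in Hp as [[y r] [Hyr Hp]].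
    apply in_map_iff in Hp as [p' [<- Hp']].
    pose proof (picks_perm l y r Hyr) as Hlr.
    apply perm_trans with (y :: r); [exact Hlr|].
    apply perm_skip, IH; [|exact Hp'].
    apply Permutation_length in Hlr; simpl in Hlr; lia.
Qed.

End Arrangements.

Fixpoint digit_lists (n : nat) : list (list nat) :=
  match n with
  | O => [[]]
  | S n => flat_map (fun d => map (cons d) (digit_lists n)) (seq 0 10)
  end.

Lemma in_digit_lists (l : list nat) :
  Forall (fun d => (d <= 9)%nat) l -> In l (digit_lists (length l)).
Proof.
  induction 1 as [|d l Hd _ IH]; [left; reflexivity|].
  cbn [length digit_lists]; apply in_flat_map; exists d; split.
  - apply in_seq; lia.
  - apply in_map, IH.
Qed.

Definition has_one_patternb (l : list nat) : bool :=
  existsb (fun p => match p with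
                    | [x; y; z; w] => one_patternb x y z w
                    | _ => false
                    end) (arrangements 4 l).

Lemma digits_have_one_pattern (l : list nat) :
  length l = 4%nat -> Forall (fun d => (d <= 9)%nat) l -> has_one_patternb l = true.
Proof.
  intros Hl Hd.
  assert (Hall : forallb has_one_patternb (digit_lists 4) = true) by (vm_compute; reflexivity).
  rewrite forallb_forall in Hall; apply Hall.
  rewrite <- Hl; apply in_digit_lists, Hd.
Qed.

Theorem lemma5p1 : E 4 1.
Proof.
  intros l Hl Hd.
  pose proof (digits_have_one_pattern l Hl Hd) as Hpat.
  apply existsb_exists in Hpat as [p [Hp Hpat]].
  apply (V_perm (map INR p)).
  2: apply Permutation_map, Permutation_sym, (arrangements_perm 4); assumption.
  destruct p as [|x [|y [|z [|w [|]]]]]; try discriminate.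
  apply V_one_pattern, one_patternbP, Hpat.
Qed.
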